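(* If $\langle A,\to\rangle$ is a conditional algebra, then its expanded Stone space $\langle\mathrm{Ul}(A),\tau_s,T_A\rangle$ is a conditional space.
   Context: A conditional algebra is a pair $\langle A,\to\rangle$ where $A$ is a Boolean algebra and $\to$ is a binary operation with, for all $a,b,c$: $a\to 1=1$; $(a\to b)\wedge(a\to c)=a\to(b\wedge c)$; $(a\vee b)\to c\le (a\to c)\wedge(b\to c)$. $\langle\mathrm{Ul}(A),\tau_s\rangle$ is the Stone space of $A$, $\varphi(a)=\{u:a\in u\}$; filters include the improper filter $A$, and $\varphi(F)=\{u:F\subseteq u\}$. $D^{\to}_X(Y)=\{b:\exists a\in Y,\ a\to b\in X\}$; $T_A(u,Z,v)$ iff there is a filter $F$ with $Z=\varphi(F)$ and $D^{\to}_u(F)\subseteq v$. A conditional space is a triple $\langle X,\tau,T\rangle$ where $\langle X,\tau\rangle$ is a Boolean (compact, Hausdorff, zero-dimensional) space and $T\subseteq X\times\mathcal{C}(\tau)\times X$ ($\mathcal{C}(\tau)$ the closed sets) satisfies: (T1) for every $x\in X$ and closed $Y$, $T(x,Y)=\{y:T(x,Y,y)\}$ is closed; (T2) for all clopen $U,V$, the set $U\to_T V=\{x:\text{for all } Z\subseteq U \text{ with } Z \text{ closed},\ T(x,Z)\subseteq V\}$ is clopen; (T3) for closed $Y$: $T(x,Y,y)$ iff $T(x,U,y)$ for every clopen $U\supseteq Y$. *)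

From HB Require Import structures.
From mathcomp Require Import all_boot all_order.
From mathcomp Require Import boolp classical_sets topology_structure
  compact separation_axioms.

Set Implicit Arguments.
Unset Strict Implicit.
Unset Printing Implicit Defensive.

Local Open Scope classical_set_scope.

Section ConditionalAlgebra.
Context {disp : Order.disp_t} {A : ctbDistrLatticeType disp}.

Definition conditional_algebra (imp : A -> A -> A) : Prop :=
  [/\ (forall a, imp a Order.top = Order.top),
      (forall a b c, Order.meet (imp a b) (imp a c) = imp a (Order.meet b c))
    & (forall a b c, (imp (Order.join a b) c
                      <= Order.meet (imp a c) (imp b c))%O)].

(* filters (the improper filter A is allowed) *)
Definition is_filter (F : set A) : Prop :=
  [/\ F Order.top,
      (forall a b, F a -> (a <= b)%O -> F b)
    & (forall a b, F a -> F b -> F (Order.meet a b))].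

Definition proper_filter (F : set A) : Prop := is_filter F /\ ~ F Order.bottom.

Definition is_ultrafilter (u : set A) : Prop :=
  proper_filter u /\ (forall F, proper_filter F -> u `<=` F -> F = u).

Record Ul := MkUl { uf_set :> set A; uf_prop : is_ultrafilter uf_set }.

HB.instance Definition _ := gen_eqMixin Ul.
HB.instance Definition _ := gen_choiceMixin Ul.

Definition phi (a : A) : set Ul := [set u : Ul | uf_set u a].
Definition phiF (F : set A) : set Ul := [set u : Ul | F `<=` uf_set u].

(* index type for the subbase {phi(a) | a in A} *)
Definition stone_index : Type := A.
HB.instance Definition _ := Choice.on stone_index.
HB.instance Definition _ := isPointed.Build stone_index (Order.top : A).

HB.instance Definition _ := isSubBaseTopological.Build Ul
  (@setT stone_index) (fun a : stone_index => phi a).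

Definition Dimp (imp : A -> A -> A) (X : set A) (Y : set A) : set A :=
  [set b | exists2 a, Y a & X (imp a b)].

Definition T_A (imp : A -> A -> A) (u : Ul) (Z : set Ul) (v : Ul) : Prop :=
  exists F : set A, [/\ is_filter F, Z = phiF F & Dimp imp (uf_set u) F `<=` uf_set v].

End ConditionalAlgebra.

Arguments Ul {disp} A.

Section ConditionalSpace.
Context {X : topologicalType}.

Definition clopen_base : Prop :=
  forall (U : set X) (x : X), open U -> U x ->
    exists V : set X, [/\ clopen V, V x & V `<=` U].

Definition boolean_space : Prop :=
  [/\ compact [set: X], hausdorff_space X & clopen_base].

Definition Tsec (T : X -> set X -> X -> Prop) (x : X) (Y : set X) : set X :=
  [set y | T x Y y].

Definition imp_T (T : X -> set X -> X -> Prop) (U V : set X) : set X :=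
  [set x | forall Z : set X, closed Z -> Z `<=` U -> Tsec T x Z `<=` V].

Definition conditional_space (T : X -> set X -> X -> Prop) : Prop :=
  [/\ boolean_space,
      (* T is a subset of X x C(tau) x X *)
      (forall x Y y, T x Y y -> closed Y),
      (forall x (Y : set X), closed Y -> closed (Tsec T x Y)),
      (forall U V : set X, clopen U -> clopen V -> clopen (imp_T T U V))
    &
      (forall (Y : set X), closed Y -> forall x y,
         T x Y y <-> (forall U : set X, clopen U -> Y `<=` U -> T x U y))].

End ConditionalSpace.

Arguments conditional_space : clear implicits.

From HB Require Import structures.
From mathcomp Require Import all_boot all_order.
From mathcomp Require Import boolp classical_sets topology_structure
  compact separation_axioms.
From mathcomp Require Import finmap.
Import Order.Theory.
Set Implicit Arguments.
Unset Strict Implicit.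
Unset Printing Implicit Defensive.
Local Open Scope classical_set_scope.

(* Zorn's lemma extends every filter of a Boolean algebra to an ultrafilter
   avoiding any given element outside it.  Hence [phiF] is injective on
   filters, every closed set [Y] is [phiF] of its filter
   [F_Y = {a | Y ⊆ phi a}], and the clopen sets are exactly the [phi a].
   For closed [Y], [T_A(u, Y, -)] is the closed set [phiF (D_u(F_Y))].  On a
   basic clopen it is governed by [{c | a -> c ∈ u}], a filter because [->]
   preserves [1] and meets in its second argument; so
   [phi a ->_T phi b = phi (a -> b)], and (T3) holds because [->] is
   antitone in its first argument, which makes [D_u(F_Y)] the union of the
   [D_u(↑a)] for [a ∈ F_Y]. *)

Section LatticeFilters.
Context {disp : Order.disp_t} {A : ctbDistrLatticeType disp}.
Implicit Types (a b c : A) (F G : set A).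

Lemma filter_top F : is_filter F -> F \top%O.
Proof. by case. Qed.

Lemma filter_up F a b : is_filter F -> F a -> (a <= b)%O -> F b.
Proof. by case=> _ + _; apply. Qed.

Lemma filter_meet F a b : is_filter F -> F a -> F b -> F (a `&` b)%O.
Proof. by case=> _ _; apply. Qed.

Definition upset a : set A := [set c | (a <= c)%O].

Lemma upset_filter a : is_filter (upset a).
Proof.
split; rewrite /upset /=.
- exact: lex1.
- by move=> b c ab /(le_trans ab).
- by move=> b c ab ac; rewrite lexI ab ac.
Qed.

Definition filter_join F G : set A :=
  [set c | exists f g, [/\ F f, G g & (f `&` g <= c)%O]].

Lemma filter_join_filter F G :
  is_filter F -> is_filter G -> is_filter (filter_join F G).
Proof.
move=> fF fG; split.
- by exists \top%O, \top%O; split; rewrite ?lex1 //; exact: filter_top.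
- move=> c d [f [g [Ff Gg le1]]] le2.
  by exists f, g; split=> //; exact: le_trans le2.
- move=> c d [f [g [Ff Gg le1]]] [f' [g' [Ff' Gg' le2]]].
  exists (f `&` f')%O, (g `&` g')%O.
  split; [exact: filter_meet|exact: filter_meet|].
  rewrite lexI (le_trans _ le1) ?(le_trans _ le2) //.
  - by apply: leI2; exact: leIr.
  - by apply: leI2; exact: leIl.
Qed.

Lemma filter_joinl F G : is_filter G -> F `<=` filter_join F G.
Proof.
by move=> fG f Ff; exists f, \top%O; split; rewrite ?meetx1 //; exact: filter_top.
Qed.

Lemma filter_joinr F G : is_filter F -> G `<=` filter_join F G.
Proof.
by move=> fF g Gg; exists \top%O, g; split; rewrite ?meet1x //; exact: filter_top.
Qed.

Lemma filter_join_bot F G : filter_join F G \bot%O ->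
  exists f g, [/\ F f, G g & (f <= Order.compl g)%O].
Proof.
case=> f [g [Ff Gg]]; rewrite lex0 => /eqP fg0.
by exists f, g; split; rewrite // -disj_leC fg0.
Qed.

End LatticeFilters.

Section Ultrafilters.
Context {disp : Order.disp_t} {A : ctbDistrLatticeType disp}.
Implicit Types (a b c : A) (F G : set A) (u : Ul A).

Lemma uf_filter u : is_filter u.
Proof. by case: u => ? [[]]. Qed.

Lemma uf_bot u : ~ uf_set u \bot%O.
Proof. by case: u => ? [[]]. Qed.

Lemma uf_compl u a : uf_set u (Order.compl a) <-> ~ uf_set u a.
Proof.
split=> [ua' ua|nua].
  by have := filter_meet (uf_filter u) ua ua'; rewrite meetxC; apply: uf_bot.
case: u nua => U [[fU U0] maxU] /= nua.
have [/filter_join_bot[f [g [Uf ag fg']]]|J0] :=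
  pselect (filter_join U (upset a) \bot%O).
  by apply: filter_up fU Uf (le_trans fg' _); rewrite leC.
have JU := maxU _ (conj (filter_join_filter fU (upset_filter a)) J0)
  (filter_joinl (upset_filter a)).
by exfalso; apply: nua; rewrite -JU; exact: filter_joinr fU _ (lexx a).
Qed.

Lemma prime_filter_ultra F : proper_filter F ->
  (forall a, F a \/ F (Order.compl a)) -> is_ultrafilter F.
Proof.
move=> pF primeF; split=> // G [fG G0] FG; apply/seteqP; split=> // a Ga.
have [//|Fa'] := primeF a; exfalso; apply: G0.
by rewrite -(meetxC a); exact: filter_meet fG Ga (FG _ Fa').
Qed.

Lemma bigcup_proper_filter I (P : set I) (G : I -> set A) : P !=set0 ->
  (forall i, P i -> proper_filter (G i)) ->
  (forall i j, P i -> P j -> exists2 k, P k & G i `|` G j `<=` G k) ->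
  proper_filter (\bigcup_(i in P) G i).
Proof.
move=> [i0 Pi0] pG dirG; have fG i : P i -> is_filter (G i) by case/pG.
split; [split|].
- by exists i0 => //; apply: filter_top (fG _ Pi0).
- by move=> a b [i Pi Ga] ab; exists i => //; apply: filter_up (fG _ Pi) Ga ab.
- move=> a b [i Pi Ga] [j Pj Gb]; have [k Pk ijk] := dirG _ _ Pi Pj.
  by exists k => //; apply: filter_meet (fG _ Pk) _ _; apply: ijk; [left|right].
- by case=> i /pG[].
Qed.

Lemma ultrafilter_exists F : proper_filter F -> exists u : Ul A, F `<=` u.
Proof.
(* Zorn is applied to [proper_filter (F `|` G)] rather than to the filters
   containing [F], so that the empty chain needs no special treatment. *)
move=> pF; pose P G := proper_filter (F `|` G).
have [|M [PM maxM]] := @Zorn_bigcup _ P.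
  move=> C CP totC; have [->|C0] := eqVneq C set0.
    by rewrite /P bigcup_set0 setU0.
  rewrite /P -bigcupUr; last exact/set0P.
  apply: bigcup_proper_filter => [|//|X Y CX CY]; first exact/set0P.
  have [XY|YX] := totC _ _ CX CY.
  - by exists Y => // a [[Fa|/XY Ya]|//]; [left|right].
  - by exists X => // a [//|[Fa|/YX Xa]]; [left|right].
suff uM : is_ultrafilter (F `|` M) by exists (MkUl uM) => a Fa; left.
split=> // G pG FMG; apply/seteqP; split=> //; apply: contrapT => GFM.
have FG : F `<=` G by move=> a Fa; apply: FMG; left.
apply: (maxM G); last by rewrite /P ((setUidPr _ _).2 FG).
split=> [a Ma|GM]; first by apply: FMG; right.
by apply: GFM => a /GM Ma; right.
Qed.

Lemma ultrafilter_avoid F a : is_filter F -> ~ F a ->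
  exists u : Ul A, F `<=` u /\ ~ uf_set u a.
Proof.
move=> fF Fa.
have [|u Ju] := @ultrafilter_exists (filter_join F (upset (Order.compl a))).
  split; first exact: filter_join_filter fF (upset_filter _).
  move=> /filter_join_bot[f [g [Ff a'g fg']]]; apply: Fa.
  by apply: filter_up fF Ff (le_trans fg' _); rewrite leCx.
exists u; split=> [b Fb|]; first exact/Ju/(filter_joinl (upset_filter _)).
by apply/uf_compl/Ju; exact: filter_joinr fF _ (lexx _).
Qed.

End Ultrafilters.

Section StoneSpace.
Context {disp : Order.disp_t} {A : ctbDistrLatticeType disp}.
Implicit Types (a b c : A) (F : set A) (u v : Ul A) (Y : set (Ul A)).

Lemma Ul_ext u v : uf_set u = uf_set v -> u = v.
Proof.
by case: u v => U pU [V pV] /= UV; subst V; rewrite (Prop_irrelevance pU pV).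
Qed.

Lemma phiT : phi (\top%O : A) = setT.
Proof. by apply/seteqP; split=> // u _; exact: filter_top (uf_filter u). Qed.

Lemma phi0 : phi (\bot%O : A) = set0.
Proof. by apply/seteqP; split=> // u /uf_bot. Qed.

Lemma phiI a b : phi (a `&` b)%O = phi a `&` phi b.
Proof.
apply/seteqP; split=> u /= => [uab|[ua ub]].
  by split; apply: filter_up (uf_filter u) uab _; [exact: leIl|exact: leIr].
exact: filter_meet (uf_filter u) ua ub.
Qed.

Lemma phiC a : phi (Order.compl a) = ~` phi a.
Proof. by apply/seteqP; split=> u /uf_compl. Qed.

Lemma finI_from_phi B : finI_from setT (phi : stone_index -> set (Ul A)) B ->
  exists a, B = phi a.
Proof.
case=> E _ <-; exists (\meet_(a <- E) a)%O.
by rewrite bigcap_fset (big_morph phi phiI phiT).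
Qed.

Lemma open_phi_base Y u : open Y -> Y u -> exists2 a, uf_set u a & phi a `<=` Y.
Proof.
rewrite /open /= => -[D DB <-] [B DB' Bu].
have [a Ba] := finI_from_phi (DB _ DB'); subst B.
by exists a => // v va; exists (phi a).
Qed.

Lemma nbhs_phi_base u Y : nbhs u Y -> exists2 a, uf_set u a & phi a `<=` Y.
Proof.
rewrite nbhsE => -[B [oB Bu] BY].
by have [a ua aB] := open_phi_base oB Bu; exists a => // v /aB /BY.
Qed.

Lemma phi_open a : open (phi a).
Proof.
by exists [set phi a]; [move=> _ ->; exact: finI_from1|rewrite bigcup_set1].
Qed.

Lemma phi_nbhs u a : uf_set u a -> nbhs u (phi a).
Proof. by move=> ua; apply: open_nbhs_nbhs; split=> //; exact: phi_open. Qed.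

Lemma phi_clopen a : clopen (phi a).
Proof. by split; [|rewrite -[a]complK phiC closedC]; exact: phi_open. Qed.

Lemma phiF_closed F : closed (phiF F).
Proof.
have -> : phiF F = \bigcap_(a in F) phi a by apply/seteqP; split=> u /=.
by apply: closed_bigI => a _; case: (phi_clopen a).
Qed.

Definition filter_of Y : set A := [set a | Y `<=` phi a].

Lemma filter_of_filter Y : is_filter (filter_of Y).
Proof.
split=> [|a b aY ab|a b aY bY] u Yu.
- exact: filter_top (uf_filter u).
- exact: filter_up (uf_filter u) (aY _ Yu) ab.
- exact: filter_meet (uf_filter u) (aY _ Yu) (bY _ Yu).
Qed.

Lemma phiF_filter_of Y : closed Y -> phiF (filter_of Y) = Y.
Proof.
move=> cY; apply/seteqP; split=> [u Yu|u Yu a]; last by apply.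
apply: cY => B /nbhs_phi_base[a ua aB]; apply: contrapT => YB.
suff /Yu /uf_compl : filter_of Y (Order.compl a) by [].
by move=> v Yv; rewrite phiC => va; apply: YB; exists v; split=> //; exact: aB.
Qed.

Lemma phiF_sub_phi F a : is_filter F -> phiF F `<=` phi a -> F a.
Proof.
move=> fF Fphi; apply: contrapT => nFa.
by have [u [Fu nua]] := ultrafilter_avoid fF nFa; apply/nua/Fphi.
Qed.

Lemma filter_of_phiF F : is_filter F -> filter_of (phiF F) = F.
Proof.
move=> fF; apply/seteqP; split=> [a|a Fa u]; first exact: phiF_sub_phi.
by apply.
Qed.

Lemma phiF_upset a : phiF (upset a) = phi a.
Proof.
apply/seteqP; split=> [u ua|u ua b]; first exact: ua (lexx a).
exact: filter_up (uf_filter u) ua.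
Qed.

Lemma clopen_phi Y : clopen Y -> exists a, Y = phi a.
Proof.
case=> oY cY; have cY' : closed (~` Y) by rewrite closedC.
have [/filter_join_bot[a [b [Ya Y'b ab']]]|J0] :=
  pselect (filter_join (filter_of Y) (filter_of (~` Y)) \bot%O).
  exists a; apply/seteqP; split=> [//|u ua]; apply: contrapT => /Y'b ub.
  by move: (filter_up (uf_filter u) ua ab') => /uf_compl.
(* Otherwise an ultrafilter containing both filters would lie in [Y] and
   in [~` Y], both being closed. *)
have [fY fY'] := (filter_of_filter Y, filter_of_filter (~` Y)).
have [u Ju] := ultrafilter_exists (conj (filter_join_filter fY fY') J0).
have Yu : Y u by rewrite -(phiF_filter_of cY) => a /(filter_joinl fY') /Ju.
suff : (~` Y) u by [].
by rewrite -(phiF_filter_of cY') => a /(filter_joinr fY) /Ju.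
Qed.

Lemma Ul_compact : compact [set: Ul A].
Proof.
rewrite compact_ultra => F UF _; pose U := [set a | F (phi a)].
have pU : proper_filter U.
  split; [split|]; rewrite /U /=.
  - by rewrite phiT; exact: filterT.
  - move=> a b Fa ab; apply: filterS Fa => u ua.
    exact: filter_up (uf_filter u) ua ab.
  - by move=> a b Fa Fb; rewrite phiI; exact: filterI.
  - by rewrite phi0; exact: filter_not_empty.
have uU : is_ultrafilter U.
  apply: prime_filter_ultra pU _ => a.
  by rewrite /U /= phiC; exact: in_ultra_setVsetC.
exists (MkUl uU); split=> // W /nbhs_phi_base[a Ua aW].
exact: filterS aW Ua.
Qed.

Lemma Ul_hausdorff : hausdorff_space (Ul A).
Proof.
move=> u v uv; apply: Ul_ext; apply/seteqP.
split=> a ua; apply: contrapT => /uf_compl a'.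
- by have [w [/= wa /uf_compl]] := uv _ _ (phi_nbhs ua) (phi_nbhs a').
- by have [w [/= /uf_compl wa]] := uv _ _ (phi_nbhs a') (phi_nbhs ua).
Qed.

Lemma Ul_boolean : boolean_space (X := Ul A).
Proof.
split; [exact: Ul_compact|exact: Ul_hausdorff|].
move=> Y u oY Yu; have [a ua aY] := open_phi_base oY Yu.
by exists (phi a); split=> //; exact: phi_clopen.
Qed.

End StoneSpace.

Section ConditionalStoneSpace.
Context {disp : Order.disp_t} {A : ctbDistrLatticeType disp}.
Implicit Types (a b c : A) (F : set A) (u v : Ul A) (Y : set (Ul A)).
Variable imp : A -> A -> A.
Hypothesis CA : conditional_algebra imp.

Lemma imp_monor a b c : (b <= c)%O -> (imp a b <= imp a c)%O.
Proof.
case: CA => _ impI _ /meet_idPl bc.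
by rewrite -bc -impI leIr.
Qed.

Lemma imp_antil a b c : (a <= b)%O -> (imp b c <= imp a c)%O.
Proof.
case: CA => _ _ impU /join_idPr ab.
by have := impU a b c; rewrite ab => /le_trans; apply; exact: leIl.
Qed.

Lemma imp_filter u a : is_filter [set c | uf_set u (imp a c)].
Proof.
case: CA => imp1 impI _; split=> /=.
- by rewrite imp1; exact: filter_top (uf_filter u).
- by move=> b c ub bc; exact: filter_up (uf_filter u) ub (imp_monor a bc).
- by move=> b c ub uc; rewrite -impI; exact: filter_meet (uf_filter u) ub uc.
Qed.

Lemma T_A_closed u Y v : T_A imp u Y v -> closed Y.
Proof. by case=> F [_ -> _]; exact: phiF_closed. Qed.

Lemma T_AE u Y v : closed Y ->
  T_A imp u Y v <-> Dimp imp (uf_set u) (filter_of Y) `<=` uf_set v.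
Proof.
move=> cY; split=> [[F [fF -> Fv]]|Yv]; first by rewrite filter_of_phiF.
exists (filter_of Y).
by rewrite phiF_filter_of //; split=> //; exact: filter_of_filter.
Qed.

Lemma T_A_phiE u a v :
  T_A imp u (phi a) v <-> (forall c, uf_set u (imp a c) -> uf_set v c).
Proof.
rewrite T_AE; last by case: (phi_clopen a).
rewrite -phiF_upset filter_of_phiF; last exact: upset_filter.
split=> [av c uac|av c [b ab ubc]].
  by apply: av; exists a => //; exact: lexx.
by apply: av; exact: filter_up (uf_filter u) ubc (imp_antil c ab).
Qed.

Lemma Tsec_closed u Y : closed Y -> closed (Tsec (T_A imp) u Y).
Proof.
move=> cY.
suff -> : Tsec (T_A imp) u Y = phiF (Dimp imp (uf_set u) (filter_of Y)).
  exact: phiF_closed.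
by apply/seteqP; split=> v /(T_AE _ _ cY).
Qed.

Lemma imp_T_phi a b : imp_T (T_A imp) (phi a) (phi b) = phi (imp a b).
Proof.
apply/seteqP; split=> u /= => [impab|uab Z cZ Za v].
  apply: contrapT => nuab.
  have [v [uav nvb]] := ultrafilter_avoid (imp_filter u a) nuab.
  apply/nvb/(impab (phi a)) => //; first by case: (phi_clopen a).
  exact/T_A_phiE.
by move=> /(T_AE _ _ cZ); apply; exists a.
Qed.

Lemma imp_T_clopen U V : clopen U -> clopen V -> clopen (imp_T (T_A imp) U V).
Proof.
move=> /clopen_phi[a ->] /clopen_phi[b ->].
by rewrite imp_T_phi; exact: phi_clopen.
Qed.

Lemma T_A_clopenE Y u v : closed Y ->
  T_A imp u Y v <-> (forall U, clopen U -> Y `<=` U -> T_A imp u U v).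
Proof.
move=> cY; split=> [uYv _ /clopen_phi[a ->] Ya|uUv].
  apply/T_A_phiE => c uac; move/(T_AE _ _ cY): uYv; apply.
  by exists a.
apply/(T_AE _ _ cY) => c [a Ya uac].
by have /T_A_phiE := uUv _ (phi_clopen a) Ya; apply.
Qed.

End ConditionalStoneSpace.

Theorem theorem5p4 (disp : Order.disp_t) (A : ctbDistrLatticeType disp)
  (imp : A -> A -> A) :
  conditional_algebra imp -> conditional_space (Ul A) (T_A imp).
Proof.
move=> CA; split.
- exact: Ul_boolean.
- exact: T_A_closed.
- exact: Tsec_closed.
- exact: imp_T_clopen CA.
- by move=> Y cY u v; exact: T_A_clopenE.
Qed.
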